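(* Let $X$ be a smooth toric variety with fan $\Sigma$ and set of maximal cones $\Sigma_{max}$. The sequence of $R\llbracket T^* \rrbracket_F$-modules \[ R\llbracket \mathrm{CDiv}_T(X) \rrbracket_F \xrightarrow{\ \psi\ } \prod_{\tau \in \Sigma_{max}} R\llbracket T_{\tau}^* \rrbracket_F \xrightarrow{\ \pi\ } \prod_{\tau \neq \tau'} R\llbracket T_{\tau \cap \tau'}^* \rrbracket_F \] is exact, where $\psi = (\psi_\tau)_{\tau \in \Sigma_{max}}$, and $\pi$ has, for each pair $\tau \neq \tau'$ of maximal cones, component $\mathrm{pr}_{\tau,\tau\cap\tau'} - \mathrm{pr}_{\tau',\tau\cap\tau'}$ (applied to the $\tau$- and $\tau'$-coordinates), with $\mathrm{pr}_{\tau,\mu}: R\llbracket T_\tau^* \rrbracket_F \to R\llbracket T_\mu^* \rrbracket_F$ induced by the natural quotient $T_\tau^* \to T_\mu^*$ for a face $\mu$ of $\tau$.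
   Context: Let $R$ be a commutative ring and $F$ a one-dimensional commutative formal group law over $R$; write $x +_F y = F(x,y)$. For an abelian group $M$, let $R\llbracket x_M\rrbracket$ be the completion of $R[x_\lambda : \lambda \in M]$ at the kernel of the augmentation $x_\lambda \mapsto 0$; the formal group ring $R\llbracket M \rrbracket_F$ is the quotient of $R\llbracket x_M\rrbracket$ by the closure of the ideal generated by $x_0$ and $x_{\lambda+\mu} - (x_\lambda +_F x_\mu)$; the class of $x_\lambda$ is again denoted $x_\lambda$. A group homomorphism $\phi: M \to M'$ induces $R\llbracket M \rrbracket_F \to R\llbracket M' \rrbracket_F$, $x_\lambda \mapsto x_{\phi(\lambda)}$. $T$ is a split torus with character lattice $T^*$, cocharacter lattice $T_*$ and pairing $\langle\ ,\ \rangle$. $X$ is a smooth toric variety with fan $\Sigma$ in $T_*$; $\Sigma(1)$ denotes its rays, $\sigma(1)$ the rays of a cone $\sigma$, $v_\rho$ the primitive generator of $\rho$. For a cone $\sigma$, $T_\sigma^* = T^*/\sigma^\perp$ with $\sigma^\perp = \{\alpha : \langle\alpha,v\rangle=0\ \forall v\in\sigma\}$; it has basis $\{\alpha_{\sigma,\rho}:\rho\in\sigma(1)\}$ dual to $\{v_\rho : \rho\in\sigma(1)\}$. For a face $\mu$ of $\sigma$, the natural quotient $T_\sigma^* \to T_\mu^*$ sends $\alpha_{\sigma,\rho}$ to $\alpha_{\mu,\rho}$ if $\rho\in\mu(1)$ and to $0$ otherwise. $\mathrm{CDiv}_T(X) = \bigoplus_{\rho\in\Sigma(1)} \mathbb{Z}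 D_\rho$ (free on the $T$-invariant prime divisors). $\psi_\sigma: R\llbracket \mathrm{CDiv}_T(X) \rrbracket_F \to R\llbracket T_\sigma^* \rrbracket_F$ is induced by $\sum n_\rho D_\rho \mapsto \sum_{\rho \in \sigma(1)} n_\rho \alpha_{\sigma,\rho}$. All these rings are $R\llbracket T^* \rrbracket_F$-modules via $T^* \to \mathrm{CDiv}_T(X)$, $\alpha\mapsto \sum_\rho \langle \alpha, v_\rho\rangle D_\rho$, and via the quotient maps $T^* \to T_\sigma^*$. *)

From HB Require Import structures.
From mathcomp Require Import all_boot all_order all_algebra.
From mathcomp Require Import finmap.
From mathcomp.multinomials Require Import monalg.

Set Implicit Arguments.
Unset Strict Implicit.
Unset Printing Implicit Defensive.

Import GRing.Theory.
Local Open Scope ring_scope.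

(* Polynomial ring R[x_M] in the variables x_lambda, lambda in M        *)

Definition xpoly (R : comRingType) (M : zmodType) := {malg R[{cmonom M}]}.

Definition xvar (R : comRingType) (M : zmodType) (l : M) : xpoly R M :=
  << ucm l >>.

Definition fadd (R : comRingType) (A : comAlgType R) (a : nat -> nat -> R)
    (k : nat) (p q : A) : A :=
  \sum_(i < k) \sum_(j < k | (i + j < k)%N) a i j *: (p ^+ i * q ^+ j).

Definition high_deg (R : comRingType) (I : choiceType)
    (k : nat) (p : {malg R[{cmonom I}]}) : Prop :=
  forall m, m \in msupp p -> (k <= mdeg m)%N.

Definition X3 (R : comRingType) (i : nat) : {malg R[{cmonom nat}]} :=
  << ucm i >>.

Record fgl (R : comRingType) := FGL {
  fgl_coef : nat -> nat -> R;
  fgl_00 : fgl_coef 0 0 = 0;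
  fgl_10 : fgl_coef 1 0 = 1;
  fgl_01 : fgl_coef 0 1 = 1;
  fgl_comm : forall i j, fgl_coef i j = fgl_coef j i;
  (* F(x,F(y,z)) = F(F(x,y),z) as power series: equality in every degree < k *)
  fgl_assoc : forall k, high_deg k
     (fadd fgl_coef k (X3 R 0) (fadd fgl_coef k (X3 R 1) (X3 R 2))
      - fadd fgl_coef k (fadd fgl_coef k (X3 R 0) (X3 R 1)) (X3 R 2))
}.

(* The formal group ring R[[M]]_F, realized as the inverse limit over k *)
(* of R[x_M] / (J_k + I^k), where I is the augmentation ideal and J_k   *)
(* is generated by x_0 and x_{l+m} - (x_l +_F x_m) (F truncated in      *)
(* degree < k, which is harmless modulo I^k).                           *)

Definition in_ideal (A : comRingType) (G : A -> Prop) (p : A) : Prop :=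
  exists s : seq (A * A),
    (forall c, c \in s -> G c.2) /\ p = \sum_(c <- s) c.1 * c.2.

Definition fgr_gen (R : comRingType) (F : fgl R) (M : zmodType) (k : nat)
    (p : xpoly R M) : Prop :=
  p = xvar R (0 : M)
  \/ (exists l m : M,
        p = xvar R (l + m) - fadd (fgl_coef F) k (xvar R l) (xvar R m))
  \/ (exists s : seq M, size s = k /\ p = \prod_(l <- s) xvar R l).

Definition fgr_cong (R : comRingType) (F : fgl R) (M : zmodType) (k : nat)
    (p q : xpoly R M) : Prop :=
  in_ideal (fgr_gen F k) (p - q).

(* an element of R[[M]]_F : a compatible sequence of representatives *)
Definition fgr_elem (R : comRingType) (F : fgl R) (M : zmodType)
    (a : nat -> xpoly R M) : Prop :=
  forall k, fgr_cong F k (a k.+1) (a k).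

Definition fgr_eq (R : comRingType) (F : fgl R) (M : zmodType)
    (a b : nat -> xpoly R M) : Prop :=
  forall k, fgr_cong F k (a k) (b k).

Definition fgr_pmap (R : comRingType) (M M' : zmodType) (phi : M -> M')
    (p : xpoly R M) : xpoly R M' :=
  mmap (fun c : R => c%:MP)
       (fun m : {cmonom M} => \prod_(l <- finsupp m) xvar R (phi l) ^+ m l) p.

Definition fgr_map (R : comRingType) (M M' : zmodType) (phi : M -> M')
    (a : nat -> xpoly R M) : nat -> xpoly R M' :=
  fun k => fgr_pmap phi (a k).

Definition fgr_mul (R : comRingType) (M : zmodType)
    (a b : nat -> xpoly R M) : nat -> xpoly R M :=
  fun k => a k * b k.

(* Smooth fans.  T_* = T^* = Z^n ('rV[int]_n) with the dot pairing.     *)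
(* ray : the finite set Sigma(1), v r the primitive generator of r.    *)
(* A (smooth, hence simplicial) cone is given by its set of rays.      *)

Definition pairing (n : nat) (a w : 'rV[int]_n) : int :=
  \sum_(i < n) a 0 i * w 0 i.

Definition cone_mem (n : nat) (ray : finType) (v : ray -> 'rV[int]_n)
    (S : {set ray}) (x : 'rV[rat]_n) : Prop :=
  exists c : ray -> rat, (forall r, 0 <= c r) /\
    x = \sum_(r in S) c r *: map_mx (fun z : int => z%:~R) (v r).

Record smooth_fan (n : nat) (ray : finType) (v : ray -> 'rV[int]_n)
    (Sigma : {set {set ray}}) : Prop := {
  fan_rays : forall r, [set r] \in Sigma;
  (* closed under faces (faces of a simplicial cone = subsets of rays) *)
  fan_faces : forall S S' : {set ray}, S \in Sigma -> S' \subset S -> S' \in Sigma;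
  fan_inter : forall S S' : {set ray}, S \in Sigma -> S' \in Sigma ->
     forall x, cone_mem v S x -> cone_mem v S' x -> cone_mem v (S :&: S') x;
  (* smoothness: the ray generators of each cone are part of a Z-basis *)
  fan_smooth : forall S : {set ray}, S \in Sigma ->
     exists B : 'M[int]_n, B \in unitmx /\
       exists f : ray -> 'I_n, {in S &, injective f} /\
         forall r, r \in S -> row (f r) B = v r
}.

Definition maximal_cones (ray : finType) (Sigma : {set {set ray}}) :
    {set {set ray}} :=
  [set S in Sigma | [forall S' in Sigma, (S \subset S') ==> (S' == S)]].

(* T_sigma^* in the coordinates of the basis alpha_{sigma,rho}, rho in S *)
Definition Lat (ray : finType) (S : {set ray}) :=
  {ffun {r : ray | r \in S} -> int}.

(* the natural map T_S^* -> T_S'^*  (alpha_{S,r} |-> alpha_{S',r} if r in S',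
   0 otherwise); used for psi_sigma (S = [set: ray], CDiv_T(X)) and pr *)
Definition restr (ray : finType) (S S' : {set ray}) (f : Lat S) : Lat S' :=
  [ffun y : {r : ray | r \in S'} =>
     (match (insub (sval y) : option {r : ray | r \in S}) with
      | Some z => f z | None => 0%R end : int)].

(* the quotient map T^* -> T_S^*, alpha |-> sum_r <alpha, v_r> alpha_{S,r};
   for S = [set: ray] this is T^* -> CDiv_T(X) *)
Definition to_Tsig (n : nat) (ray : finType) (v : ray -> 'rV[int]_n)
    (S : {set ray}) (a : 'rV[int]_n) : Lat S :=
  [ffun y : {r : ray | r \in S} => pairing a (v (sval y))].

Arguments restr {ray} S S' f.
Arguments to_Tsig {n ray} v S a.

(* A compatible family (b_tau) over the maximal cones is glued one cone at a
   time.  Extension by zero, [restr tau [set: ray]] (x_{alpha_{tau,rho}} |->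
   x_{D_rho}), is a section of psi_tau = [restr [set: ray] tau], so adding the
   extension of b_tau - psi_tau(a) to the partial glueing a makes it correct on
   tau.  On another cone tau' this correction factors through the restriction
   to tau :&: tau', where it vanishes by compatibility, so the cones already
   treated are not disturbed.  All of this happens modulo the k-th congruence,
   which every map x_lambda |-> x_{phi lambda} with phi additive preserves. *)

From HB Require Import structures.
From mathcomp Require Import all_boot all_order all_algebra.
From mathcomp Require Import finmap.
From mathcomp.multinomials Require Import monalg.

Set Implicit Arguments.
Unset Strict Implicit.
Unset Printing Implicit Defensive.

Import GRing.Theory.
Local Open Scope fset_scope.
Local Open Scope ring_scope.

Section XpolyMap.
Variables (R : comRingType) (M M' : zmodType) (phi : M -> M').

Definition xmonom_eval (m : {cmonom M}) : xpoly R M' :=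
  \prod_(l <- finsupp m) xvar R (phi l) ^+ m l.

Lemma xmonom_evalEw (m : {cmonom M}) (d : {fset M}) : finsupp m `<=` d ->
  xmonom_eval m = \prod_(l <- d) xvar R (phi l) ^+ m l.
Proof.
move=> le; rewrite /xmonom_eval (big_fset_incl _ le) // => l _.
by rewrite -cmE_neq0 negbK => /eqP ->; rewrite expr0.
Qed.

Lemma xmonom_eval_is_multiplicative : mmorphism xmonom_eval.
Proof.
split=> [m1 m2|]; last by rewrite /xmonom_eval mdom1 big_seq_fset0.
rewrite (xmonom_evalEw (fsubsetUl (finsupp m1) (finsupp m2))).
rewrite (xmonom_evalEw (fsubsetUr (finsupp m1) (finsupp m2))) [LHS]/xmonom_eval mdomD.
by rewrite -big_split; apply/eq_bigr=> l _; rewrite cmM exprD.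
Qed.

HB.instance Definition _ :=
  isMultiplicative.Build _ _ xmonom_eval xmonom_eval_is_multiplicative.

HB.instance Definition _ :=
  GRing.RMorphism.copy (@fgr_pmap R M M' phi) (mmap (@malgC _ R) xmonom_eval).

Local Notation pmap := (@fgr_pmap R M M' phi).

Lemma pmapC c : pmap c%:MP = c%:MP.
Proof. exact: (mmapC (f := @malgC _ R) (h := xmonom_eval)). Qed.

Lemma pmapZ c p : pmap (c *: p) = c *: pmap p.
Proof. by rewrite -!mul_malgC rmorphM /= pmapC. Qed.

Lemma pmap_xvar l : pmap (xvar R l) = xvar R (phi l).
Proof.
by rewrite [LHS]mmapU /= mpolyC1E mul1r /xmonom_eval mdomU big_seq_fset1 cmUU expr1.
Qed.

Lemma pmap_fadd (a : nat -> nat -> R) k p q :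
  pmap (fadd a k p q) = fadd a k (pmap p) (pmap q).
Proof.
rewrite /fadd rmorph_sum /=; apply: eq_bigr => i _.
by rewrite rmorph_sum /=; apply: eq_bigr => j _; rewrite pmapZ rmorphM !rmorphXn.
Qed.

Lemma pmap_fadd_xvar (a : nat -> nat -> R) k l m :
  pmap (fadd a k (xvar R l) (xvar R m)) = fadd a k (xvar R (phi l)) (xvar R (phi m)).
Proof. by rewrite -(pmap_xvar l) -(pmap_xvar m); apply: pmap_fadd. Qed.
End XpolyMap.

Lemma malgU_mul (K : monomType) (R : ringType) (m1 m2 : K) :
  << mmul m1 m2 >> = << m1 >> * << m2 >> :> {malg R[K]}.
Proof. by rewrite malgM_def fgmulUU mulr1. Qed.

Section XpolyExt.
Variables (R : comRingType) (M : zmodType).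

Lemma cmonom_prodE (m : {cmonom M}) :
  m = \big[mmul/mone]_(l <- finsupp m) \big[mmul/mone]_(0 <= j < m l) ucm l.
Proof.
apply/eqP/cmP => i; rewrite (big_morph _ (cmM i) (cm1 i)).
under eq_bigr => l _ do
  rewrite (big_morph _ (cmM i) (cm1 i)) sum_nat_const_nat subn0 cmU.
have [m_i|m_i] := boolP (i \in finsupp m).
  rewrite (big_fsetD1 i) //= eqxx muln1 big_seq big1 ?addn0 // => l.
  by rewrite in_fsetD1 => /andP [/negbTE -> _]; rewrite muln0.
rewrite big_seq big1 => [|l m_l]; first by apply/eqP; rewrite cmE_eq0.
by case: eqP => [li|]; [move: m_i; rewrite -li m_l | rewrite muln0].
Qed.

Lemma xpoly_monomE (m : {cmonom M}) :
  << m >> = \prod_(l <- finsupp m) xvar R l ^+ m l :> xpoly R M.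
Proof.
have malgU1 : << (mone : {cmonom M}) >> = 1 :> xpoly R M by rewrite mpolyC1E.
rewrite {1}(cmonom_prodE m) (big_morph _ (@malgU_mul _ R) malgU1).
apply: eq_bigr => l _.
by rewrite /xvar (big_morph _ (@malgU_mul _ R) malgU1) prodr_const_nat subn0.
Qed.

Lemma xpoly_rmorph_ext (S : ringType) (f g : {rmorphism xpoly R M -> S}) :
  (forall c, f c%:MP = g c%:MP) -> (forall l, f (xvar R l) = g (xvar R l)) ->
  f =1 g.
Proof.
move=> fgC fgX p; rewrite (monalgE p) !rmorph_sum; apply: eq_bigr => m _.
have -> : << p@_m *g m >> = (p@_m)%:MP * << m >> :> xpoly R M.
  by rewrite malgM_def fgmulUU mulr1 mul1m.
rewrite !rmorphM; congr (_ * _); first exact: fgC.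
rewrite (xpoly_monomE m) !rmorph_prod; apply: eq_bigr => l _.
by rewrite !rmorphXn; congr (_ ^+ _); apply: fgX.
Qed.
End XpolyExt.

Section XpolyMapComp.
Variables (R : comRingType) (M M' M'' : zmodType).

Lemma pmap_id (phi : M -> M) : phi =1 id -> fgr_pmap (R := R) phi =1 id.
Proof.
move=> phiE; apply: (xpoly_rmorph_ext (f := fgr_pmap phi) (g := idfun)) => [c|l] /=.
  exact: pmapC.
by rewrite pmap_xvar phiE.
Qed.

Lemma pmap_comp (phi : M -> M') (psi : M' -> M'') (chi : M -> M'') :
  psi \o phi =1 chi ->
  fgr_pmap (R := R) psi \o fgr_pmap (R := R) phi =1 fgr_pmap (R := R) chi.
Proof.
move=> E; apply: xpoly_rmorph_ext => [c|l] /=; first by rewrite !pmapC.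
by rewrite !pmap_xvar -E.
Qed.
End XpolyMapComp.

Section Ideal.
Variables (A : comRingType) (G : A -> Prop).

Lemma in_ideal0 : in_ideal G 0.
Proof. by exists [::]; split=> //; rewrite big_nil. Qed.

Lemma in_idealD p q : in_ideal G p -> in_ideal G q -> in_ideal G (p + q).
Proof.
move=> [s1 [G1 ->]] [s2 [G2 ->]]; exists (s1 ++ s2); split; last by rewrite big_cat.
by move=> c; rewrite mem_cat => /orP [/G1|/G2].
Qed.

Lemma in_idealMl r p : in_ideal G p -> in_ideal G (r * p).
Proof.
move=> [s [Gs ->]]; exists [seq (r * c.1, c.2) | c <- s]; split.
  by move=> _ /mapP [c c_s ->]; exact: (Gs _ c_s).
by rewrite big_map mulr_sumr; apply: eq_bigr => c _; rewrite mulrA.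
Qed.

Lemma in_idealN p : in_ideal G p -> in_ideal G (- p).
Proof. by rewrite -mulN1r; apply: in_idealMl. Qed.
End Ideal.

Section Congruence.
Variables (R : comRingType) (F : fgl R) (M : zmodType) (k : nat).
Local Notation cong := (@fgr_cong R F M k).

Lemma cong_refl p : cong p p.
Proof. by rewrite /fgr_cong subrr; apply: in_ideal0. Qed.

Lemma cong_trans p q r : cong p q -> cong q r -> cong p r.
Proof. by move=> pq qr; rewrite /fgr_cong -(subrKA q); apply: in_idealD. Qed.

Lemma congD p q p' q' : cong p q -> cong p' q' -> cong (p + p') (q + q').
Proof. by move=> pq pq'; rewrite /fgr_cong opprD addrACA; apply: in_idealD. Qed.

Lemma congN p q : cong p q -> cong (- p) (- q).
Proof. by rewrite /fgr_cong -opprD; apply: in_idealN. Qed.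

Lemma congB p q p' q' : cong p q -> cong p' q' -> cong (p - p') (q - q').
Proof. by move=> pq /congN; apply: congD. Qed.
End Congruence.

Section CongruenceMap.
Variables (R : comRingType) (F : fgl R) (M M' : zmodType) (phi : {additive M -> M'}).

Lemma fgr_gen_pmap k p : fgr_gen F k p -> fgr_gen F k (fgr_pmap (R := R) phi p).
Proof.
case=> [->|[[l [m ->]]|[s [size_s ->]]]].
- by left; rewrite pmap_xvar raddf0.
- right; left; exists (phi l), (phi m).
  by rewrite (rmorphB (fgr_pmap (R := R) phi)) /= pmap_xvar pmap_fadd_xvar raddfD.
- right; right; exists [seq phi l | l <- s]; rewrite size_map rmorph_prod big_map /=.
  by split=> //; apply: eq_bigr => l _; apply: pmap_xvar.
Qed.

Lemma cong_pmap k p q :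
  fgr_cong F k p q -> fgr_cong F k (fgr_pmap (R := R) phi p) (fgr_pmap phi q).
Proof.
move=> [s [Gs pqE]].
rewrite /fgr_cong -(rmorphB (fgr_pmap (R := R) phi)) /=.
rewrite pqE rmorph_sum /=.
exists [seq (fgr_pmap phi c.1, fgr_pmap phi c.2) | c <- s]; split.
  by move=> _ /mapP [c c_s ->]; apply/fgr_gen_pmap/Gs.
by rewrite big_map; apply: eq_bigr => c _; rewrite rmorphM.
Qed.
End CongruenceMap.

Section Restriction.
Variable ray : finType.
Implicit Types S : {set ray}.

Lemma restr_is_zmod_morphism S S' : zmod_morphism (restr S S').
Proof.
by move=> f g; apply/ffunP => y; rewrite !ffunE; case: insubP => [z _ _|_];
  rewrite ?ffunE ?subr0.
Qed.

HB.instance Definition _ S S' :=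
  GRing.isZmodMorphism.Build _ _ (restr S S') (@restr_is_zmod_morphism S S').

Lemma restr_comp S1 S2 S3 : S3 :&: S1 \subset S2 ->
  restr S2 S3 \o restr S1 S2 =1 restr S1 S3.
Proof.
move=> sub13 f; apply/ffunP => y; rewrite !ffunE /=.
case: insubP => [z Sz zE|notS2y]; rewrite ?ffunE.
  case: insubP => [z' Sz' z'E|notS1z]; case: insubP => [z'' Sz'' z''E|notS1y] //.
  - by congr (f _); apply: val_inj; rewrite z'E z''E zE.
  - by move: notS1y; rewrite -zE Sz'.
  - by move: notS1z; rewrite zE Sz''.
case: insubP => [z'' Sz'' _|] //.
by move: notS2y; rewrite (subsetP sub13) // inE (svalP y).
Qed.

Lemma restr_id S : restr S S =1 id.
Proof.
move=> f; apply/ffunP => y; rewrite ffunE; case: insubP => [z _ zE|].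
  by congr (f _); apply: val_inj.
by rewrite (svalP y).
Qed.

Lemma restr_Tsig n (v : ray -> 'rV[int]_n) S S' : S' \subset S ->
  restr S S' \o to_Tsig v S =1 to_Tsig v S'.
Proof.
move=> subS a; apply/ffunP => y; rewrite !ffunE /=; case: insubP => [z _ zE|].
  by rewrite ffunE zE.
by rewrite (subsetP subS) // (svalP y).
Qed.
End Restriction.

Section Gluing.
Variables (R : comRingType) (F : fgl R) (ray : finType) (k : nat).
Local Notation res S S' := (fgr_pmap (R := R) (restr S S')).
Local Notation cong := (fgr_cong F k).

Lemma res_trans (S1 S2 S3 : {set ray}) (p : xpoly R (Lat S1)) : S3 :&: S1 \subset S2 ->
  res S2 S3 (res S1 S2 p) = res S1 S3 p.
Proof. by move=> sub13; apply: (pmap_comp (restr_comp sub13)). Qed.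

Lemma res_id (S : {set ray}) (p : xpoly R (Lat S)) : res S S p = p.
Proof. exact: (pmap_id (@restr_id _ S)). Qed.

Lemma res_extendK (S : {set ray}) (p : xpoly R (Lat S)) :
  res [set: ray] S (res S [set: ray] p) = p.
Proof. by rewrite res_trans ?subsetT ?res_id. Qed.

Lemma res_setT_inter (S S' : {set ray}) (a : xpoly R (Lat [set: ray])) :
  res S (S :&: S') (res [set: ray] S a) = res S' (S :&: S') (res [set: ray] S' a).
Proof. by rewrite !res_trans // setIT ?subsetIl ?subsetIr. Qed.

Lemma cong_res_extend0 (S S' : {set ray}) (c : xpoly R (Lat S)) :
  cong (res S (S :&: S') c) 0 -> cong (res [set: ray] S' (res S [set: ray] c)) 0.
Proof.
have sub : S' :&: S \subset S :&: S' by rewrite setIC.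
move=> /(cong_pmap (restr (S :&: S') S')); rewrite rmorph0 (res_trans c sub).
by rewrite res_trans ?subsetT.
Qed.

Lemma res_Tsig n (v : ray -> 'rV[int]_n) (S S' : {set ray}) (s : xpoly R 'rV[int]_n) :
  S' \subset S -> res S S' (fgr_pmap (to_Tsig v S) s) = fgr_pmap (to_Tsig v S') s.
Proof. by move=> sub; apply: (pmap_comp (restr_Tsig v sub)). Qed.

Definition glue (b : forall tau : {set ray}, xpoly R (Lat tau)) (l : seq {set ray}) :
    xpoly R (Lat [set: ray]) :=
  foldr (fun tau a => a + res tau [set: ray] (b tau - res [set: ray] tau a)) 0 l.

Lemma cong_glue b b' l : (forall tau, tau \in l -> cong (b tau) (b' tau)) ->
  cong (glue b l) (glue b' l).
Proof.
elim: l => [|t0 l IHl] bb' /=; first exact: cong_refl.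
have IH : cong (glue b l) (glue b' l).
  by apply: IHl => tau l_tau; apply: bb'; rewrite inE l_tau orbT.
apply: congD => //; apply: cong_pmap; apply: congB; last exact: cong_pmap.
by apply: bb'; rewrite inE eqxx.
Qed.

Lemma res_glue b l :
  (forall tau tau', tau \in l -> tau' \in l -> tau != tau' ->
     cong (res tau (tau :&: tau') (b tau)) (res tau' (tau :&: tau') (b tau'))) ->
  forall tau, tau \in l -> cong (res [set: ray] tau (glue b l)) (b tau).
Proof.
elim: l => [//|t0 l IHl] compat tau /=.
set a := glue b l; set c := b t0 - _.
rewrite (rmorphD (res [set: ray] tau)) /= inE.
have [->|tau_t0] /= := eqVneq tau t0.
  by move=> _; rewrite res_extendK /c addrC subrK; apply: cong_refl.
move=> l_tau.
have a_tau : cong (res [set: ray] tau a) (b tau).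
  apply: (IHl _ tau l_tau) => t t' l_t l_t' tt'.
  by apply: compat => //; rewrite inE ?l_t ?l_t' orbT.
have c_vanishes : cong (res t0 (t0 :&: tau) c) 0.
  have t0_tau : cong (res t0 (t0 :&: tau) (b t0)) (res tau (t0 :&: tau) (b tau)).
    by apply: compat; rewrite ?inE ?eqxx ?l_tau ?orbT // eq_sym.
  rewrite (rmorphB (res t0 (t0 :&: tau))) /= res_setT_inter.
  apply: cong_trans (congB t0_tau (cong_pmap _ a_tau)) _.
  by rewrite subrr; apply: cong_refl.
by rewrite -[b tau]addr0; apply: congD a_tau (cong_res_extend0 c_vanishes).
Qed.
End Gluing.

Theorem proposition3p2 (R : comRingType) (F : fgl R) (n : nat) (ray : finType)
    (v : ray -> 'rV[int]_n) (Sigma : {set {set ray}})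
    (HX : smooth_fan v Sigma) :
  let Smax := maximal_cones Sigma in
  (* CDiv_T(X) = Lat [set: ray]; psi_tau and pr_{tau,mu} *)
  let psi (tau : {set ray}) := fgr_map (R := R) (restr [set: ray] tau) in
  let pr (tau mu : {set ray}) := fgr_map (R := R) (restr tau mu) in
  (* R[[T^*]]_F-module structures *)
  let str (S : {set ray}) := fgr_map (R := R) (to_Tsig v S) in
  (* psi and pi are R[[T^*]]_F-linear *)
  (forall tau, tau \in Smax ->
     forall (s : nat -> xpoly R 'rV[int]_n) (a : nat -> xpoly R (Lat [set: ray])),
     fgr_elem F s -> fgr_elem F a ->
     fgr_eq F (psi tau (fgr_mul (str [set: ray] s) a))
              (fgr_mul (str tau s) (psi tau a))) /\
  (forall tau tau', tau \in Smax -> tau' \in Smax -> tau != tau' ->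
     forall (s : nat -> xpoly R 'rV[int]_n) (b : nat -> xpoly R (Lat tau)),
     fgr_elem F s -> fgr_elem F b ->
     fgr_eq F (pr tau (tau :&: tau') (fgr_mul (str tau s) b))
              (fgr_mul (str (tau :&: tau') s) (pr tau (tau :&: tau') b))) /\
  (* im psi is contained in ker pi *)
  (forall a : nat -> xpoly R (Lat [set: ray]), fgr_elem F a ->
     forall tau tau', tau \in Smax -> tau' \in Smax -> tau != tau' ->
     fgr_eq F (pr tau (tau :&: tau') (psi tau a))
              (pr tau' (tau :&: tau') (psi tau' a))) /\
  (* ker pi is contained in im psi *)
  (forall b : forall tau : {set ray}, nat -> xpoly R (Lat tau),
     (forall tau, tau \in Smax -> fgr_elem F (b tau)) ->
     (forall tau tau', tau \in Smax -> tau' \in Smax -> tau != tau' ->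
        fgr_eq F (pr tau (tau :&: tau') (b tau))
                 (pr tau' (tau :&: tau') (b tau'))) ->
     exists a : nat -> xpoly R (Lat [set: ray]), fgr_elem F a /\
       forall tau, tau \in Smax -> fgr_eq F (psi tau a) (b tau)).
Proof.
move=> Smax psi pr str.
split.
  move=> tau _ s a _ _ k; rewrite /psi /str /fgr_map /fgr_mul rmorphM /=.
  by rewrite res_Tsig ?subsetT //; apply: cong_refl.
split.
  move=> tau tau' _ _ _ s b _ _ k; rewrite /pr /str /fgr_map /fgr_mul rmorphM /=.
  by rewrite res_Tsig ?subsetIl //; apply: cong_refl.
split.
  by move=> a _ tau tau' _ _ _ k; rewrite /pr /psi /fgr_map res_setT_inter; apply: cong_refl.
move=> b b_elem b_compat.
exists (fun k => glue (b^~ k) (enum Smax)); split=> [k|tau tau_max k].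
  by apply: cong_glue => tau; rewrite mem_enum => /b_elem.
apply: res_glue; last by rewrite mem_enum.
by move=> t t'; rewrite !mem_enum => t_max t'_max tt'; apply: b_compat.
Qed.
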